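(* Let $\mathcal{C}$ be a peircean bicategory with monoidal product $\otimes$, and define $a\otimes^\bullet b:=\neg(\neg a\otimes\neg b)$. Then for all arrows $c:X\to Y$ and $d:Z\to W$, $c\otimes d\le c\otimes^\bullet d$.
   Context: Composition in diagrammatic order. A cartesian bicategory is a poset-enriched symmetric monoidal category $(\mathcal{C},\otimes,I)$ with, for each $X$, commutative comonoid $(\mathrm{copy}_X,\mathrm{disc}_X)$ and monoid $(\mathrm{cocopy}_X,\mathrm{codisc}_X)$ forming special Frobenius bimonoids, comonoid left adjoint to monoid, every arrow $c$ satisfying $c;\mathrm{copy}\le\mathrm{copy};(c\otimes c)$ and $c;\mathrm{disc}\le\mathrm{disc}$, with standard coherence. A map is an arrow $f$ with $f;\mathrm{copy}=\mathrm{copy};(f\otimes f)$ and $f;\mathrm{disc}=\mathrm{disc}$. A peircean bicategory is a cartesian bicategory whose homsets carry Boolean algebras (with the given order) such that $f;\neg c=\neg(f;c)$ for every map $f:X\to Y$ and arrow $c:Y\to Z$. *)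

(* Plain Rocq (no library needed): an explicit axiomatisation of
   peircean bicategories, following the paper's definitions.
   Composition is written in DIAGRAMMATIC order: cmp f g = f ; g. *)

Record SymMonPoset := {
  ob : Type;
  hom : ob -> ob -> Type;
  idn : forall {X : ob}, hom X X;
  cmp : forall {X Y Z : ob}, hom X Y -> hom Y Z -> hom X Z;
  cmp_assoc : forall X Y Z W (f : hom X Y) (g : hom Y Z) (h : hom Z W),
      cmp (cmp f g) h = cmp f (cmp g h);
  idn_cmp : forall X Y (f : hom X Y), cmp idn f = f;
  cmp_idn : forall X Y (f : hom X Y), cmp f idn = f;
  le : forall {X Y : ob}, hom X Y -> hom X Y -> Prop;
  le_refl : forall X Y (f : hom X Y), le f f;
  le_trans : forall X Y (f g h : hom X Y), le f g -> le g h -> le f h;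
  le_antisym : forall X Y (f g : hom X Y), le f g -> le g f -> f = g;
  cmp_mono : forall X Y Z (f f' : hom X Y) (g g' : hom Y Z),
      le f f' -> le g g' -> le (cmp f g) (cmp f' g');
  ot : ob -> ob -> ob;
  unit : ob;
  tns : forall {X Y Z W : ob}, hom X Y -> hom Z W -> hom (ot X Z) (ot Y W);
  tns_idn : forall X Z, tns (@idn X) (@idn Z) = idn;
  tns_cmp : forall X Y Z X' Y' Z' (f : hom X Y) (g : hom Y Z)
      (f' : hom X' Y') (g' : hom Y' Z'),
      tns (cmp f g) (cmp f' g') = cmp (tns f f') (tns g g');
  tns_mono : forall X Y Z W (f f' : hom X Y) (g g' : hom Z W),
      le f f' -> le g g' -> le (tns f g) (tns f' g');
  assoc : forall X Y Z, hom (ot (ot X Y) Z) (ot X (ot Y Z));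
  assoc_inv : forall X Y Z, hom (ot X (ot Y Z)) (ot (ot X Y) Z);
  assoc_iso1 : forall X Y Z, cmp (assoc X Y Z) (assoc_inv X Y Z) = idn;
  assoc_iso2 : forall X Y Z, cmp (assoc_inv X Y Z) (assoc X Y Z) = idn;
  lunit : forall X, hom (ot unit X) X;
  lunit_inv : forall X, hom X (ot unit X);
  lunit_iso1 : forall X, cmp (lunit X) (lunit_inv X) = idn;
  lunit_iso2 : forall X, cmp (lunit_inv X) (lunit X) = idn;
  runit : forall X, hom (ot X unit) X;
  runit_inv : forall X, hom X (ot X unit);
  runit_iso1 : forall X, cmp (runit X) (runit_inv X) = idn;
  runit_iso2 : forall X, cmp (runit_inv X) (runit X) = idn;
  sym : forall X Y, hom (ot X Y) (ot Y X);
  sym_inv : forall X Y, cmp (sym X Y) (sym Y X) = idn;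
  assoc_nat : forall X X' Y Y' Z Z' (f : hom X X') (g : hom Y Y') (h : hom Z Z'),
      cmp (tns (tns f g) h) (assoc X' Y' Z') = cmp (assoc X Y Z) (tns f (tns g h));
  lunit_nat : forall X Y (f : hom X Y),
      cmp (tns (@idn unit) f) (lunit Y) = cmp (lunit X) f;
  runit_nat : forall X Y (f : hom X Y),
      cmp (tns f (@idn unit)) (runit Y) = cmp (runit X) f;
  sym_nat : forall X X' Y Y' (f : hom X X') (g : hom Y Y'),
      cmp (tns f g) (sym X' Y') = cmp (sym X Y) (tns g f);
  pentagon : forall W X Y Z,
      cmp (tns (assoc W X Y) (@idn Z))
          (cmp (assoc W (ot X Y) Z) (tns (@idn W) (assoc X Y Z)))
      = cmp (assoc (ot W X) Y Z) (assoc W X (ot Y Z));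
  triangle : forall X Y,
      cmp (assoc X unit Y) (tns (@idn X) (lunit Y)) = tns (runit X) (@idn Y);
  hexagon : forall X Y Z,
      cmp (assoc X Y Z) (cmp (sym X (ot Y Z)) (assoc Y Z X))
      = cmp (tns (sym X Y) (@idn Z)) (cmp (assoc Y X Z) (tns (@idn Y) (sym X Z)))
}.

Arguments idn {_ _}.
Arguments cmp {_ _ _ _}.
Arguments le {_ _ _}.
Arguments tns {_ _ _ _ _}.
Arguments ot {_}.
Arguments unit {_}.
Arguments assoc {_}.
Arguments assoc_inv {_}.
Arguments lunit {_}.
Arguments lunit_inv {_}.
Arguments runit {_}.
Arguments runit_inv {_}.
Arguments sym {_}.

Definition mid {C : SymMonPoset} (A B D E : ob C) :
  hom C (ot (ot A B) (ot D E)) (ot (ot A D) (ot B E)) :=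
  cmp (assoc A B (ot D E))
 (cmp (tns (@idn C A) (assoc_inv B D E))
 (cmp (tns (@idn C A) (tns (sym B D) (@idn C E)))
 (cmp (tns (@idn C A) (assoc D B E))
      (assoc_inv A D (ot B E))))).

Record Cartesian (C : SymMonPoset) := {
  copy : forall X : ob C, hom C X (ot X X);
  disc : forall X : ob C, hom C X unit;
  cocopy : forall X : ob C, hom C (ot X X) X;
  codisc : forall X : ob C, hom C unit X;
  copy_assoc : forall X, cmp (copy X) (cmp (tns (copy X) idn) (assoc X X X))
                        = cmp (copy X) (tns idn (copy X));
  copy_lunit : forall X, cmp (copy X) (cmp (tns (disc X) idn) (lunit X)) = idn;
  copy_runit : forall X, cmp (copy X) (cmp (tns idn (disc X)) (runit X)) = idn;
  copy_comm : forall X, cmp (copy X) (sym X X) = copy X;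
  cocopy_assoc : forall X, cmp (assoc X X X) (cmp (tns idn (cocopy X)) (cocopy X))
                          = cmp (tns (cocopy X) idn) (cocopy X);
  cocopy_lunit : forall X, cmp (lunit_inv X) (cmp (tns (codisc X) idn) (cocopy X)) = idn;
  cocopy_runit : forall X, cmp (runit_inv X) (cmp (tns idn (codisc X)) (cocopy X)) = idn;
  cocopy_comm : forall X, cmp (sym X X) (cocopy X) = cocopy X;
  frobenius : forall X,
      cmp (tns (copy X) idn) (cmp (assoc X X X) (tns idn (cocopy X)))
      = cmp (cocopy X) (copy X);
  special : forall X, cmp (copy X) (cocopy X) = idn;
  copy_adj_unit : forall X, le idn (cmp (copy X) (cocopy X));
  copy_adj_counit : forall X, le (cmp (cocopy X) (copy X)) idn;
  disc_adj_unit : forall X, le idn (cmp (disc X) (codisc X));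
  disc_adj_counit : forall X, le (cmp (codisc X) (disc X)) idn;
  lax_copy : forall X Y (c : hom C X Y), le (cmp c (copy Y)) (cmp (copy X) (tns c c));
  lax_disc : forall X Y (c : hom C X Y), le (cmp c (disc Y)) (disc X);
  copy_ot : forall X Y, copy (ot X Y) = cmp (tns (copy X) (copy Y)) (mid X X Y Y);
  copy_unit : copy unit = lunit_inv unit;
  disc_ot : forall X Y, disc (ot X Y) = cmp (tns (disc X) (disc Y)) (lunit unit);
  disc_unit : disc unit = idn;
  cocopy_ot : forall X Y, cocopy (ot X Y) = cmp (mid X Y X Y) (tns (cocopy X) (cocopy Y));
  cocopy_unit : cocopy unit = lunit unit;
  codisc_ot : forall X Y, codisc (ot X Y) = cmp (lunit_inv unit) (tns (codisc X) (codisc Y));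
  codisc_unit : codisc unit = idn
}.

Arguments copy {_} _.
Arguments disc {_} _.
Arguments cocopy {_} _.
Arguments codisc {_} _.

Definition is_map {C : SymMonPoset} (K : Cartesian C) {X Y : ob C} (f : hom C X Y) : Prop :=
  cmp f (copy K Y) = cmp (copy K X) (tns f f) /\ cmp f (disc K Y) = disc K X.

Record BooleanHoms (C : SymMonPoset) := {
  bbot : forall {X Y : ob C}, hom C X Y;
  btop : forall {X Y : ob C}, hom C X Y;
  bmeet : forall {X Y : ob C}, hom C X Y -> hom C X Y -> hom C X Y;
  bjoin : forall {X Y : ob C}, hom C X Y -> hom C X Y -> hom C X Y;
  bneg : forall {X Y : ob C}, hom C X Y -> hom C X Y;
  bbot_le : forall X Y (c : hom C X Y), le bbot c;
  le_btop : forall X Y (c : hom C X Y), le c btop;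
  bmeet_glb : forall X Y (a b c : hom C X Y), le a (bmeet b c) <-> (le a b /\ le a c);
  bjoin_lub : forall X Y (a b c : hom C X Y), le (bjoin a b) c <-> (le a c /\ le b c);
  bdistr : forall X Y (a b c : hom C X Y),
      bmeet a (bjoin b c) = bjoin (bmeet a b) (bmeet a c);
  bneg_meet : forall X Y (c : hom C X Y), bmeet c (bneg c) = bbot;
  bneg_join : forall X Y (c : hom C X Y), bjoin c (bneg c) = btop
}.

Arguments bneg {_} _ {_ _}.

Record Peircean := {
  pc_cat : SymMonPoset;
  pc_cart : Cartesian pc_cat;
  pc_bool : BooleanHoms pc_cat;
  pc_peirce : forall X Y Z (f : hom pc_cat X Y) (c : hom pc_cat Y Z),
      is_map pc_cart f -> cmp f (bneg pc_bool c) = bneg pc_bool (cmp f c)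
}.

Definition tns_bullet (P : Peircean) {X Y Z W : ob (pc_cat P)}
  (a : hom (pc_cat P) X Y) (b : hom (pc_cat P) Z W) : hom (pc_cat P) (ot X Z) (ot Y W) :=
  bneg (pc_bool P) (tns (bneg (pc_bool P) a) (bneg (pc_bool P) b)).

From Corelib Require Import ssreflect.

(* Write m := (c ⊗ d) ⊓ (¬c ⊗ ¬d); by Boolean algebra it suffices that m ≤ ⊥.
   Let π := (id ⊗ disc) ⨾ ρ : X ⊗ Z → X discard the second component.  Every
   arrow is a lax comonoid morphism, so (c ⊗ d) ⨾ π ≤ π ⨾ c, and π preserves
   meets because it has the right adjoint ρ⁻¹ ⨾ (id ⊗ codisc); hence
   m ⨾ π ≤ π ⨾ (c ⊓ ¬c) = π ⨾ ⊥, and m ⨾ disc ≤ m ⨾ π ⨾ disc ≤ ⊥.  Finally an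
   arrow m with m ⨾ disc ≤ ⊥ is ⊥: bending it into the effect
   (id ⊗ m) ⨾ cocopy ⨾ disc ≤ disc ⊗ (m ⨾ disc) ≤ ⊥ loses nothing, since the
   snake equation of the Frobenius structure bends it back.  Peirce's law
   enters only through disc ⨾ ⊥ = ⊥, which holds because disc is a map. *)

#[local] Arguments le_refl {s X Y} f.
#[local] Arguments cmp_mono {s X Y Z f f' g g'}.
#[local] Arguments tns_mono {s X Y Z W f f' g g'}.
#[local] Arguments cmp_assoc {s X Y Z W} f g h.
#[local] Arguments idn_cmp {s X Y} f.
#[local] Arguments cmp_idn {s X Y} f.
#[local] Arguments tns_idn {s} X Z.
#[local] Arguments assoc_nat {s X X' Y Y' Z Z'} f g h.

Local Notation "f ⨾ g" := (cmp f g) (at level 60, right associativity).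
Local Notation "f ⊗ g" := (tns f g) (at level 40, left associativity).
Local Notation "f ≤ g" := (le f g) (at level 70, no associativity).

Section Monoidal.
Context {C : SymMonPoset}.

Lemma le_trans_mid {X Y} (g f h : hom C X Y) : f ≤ g -> g ≤ h -> f ≤ h.
Proof. exact: le_trans. Qed.

Lemma cmp_monol {X Y Z} (f f' : hom C X Y) (g : hom C Y Z) :
  f ≤ f' -> f ⨾ g ≤ f' ⨾ g.
Proof. by move=> le_f; apply: cmp_mono le_f (le_refl _). Qed.

Lemma cmp_monor {X Y Z} (f : hom C X Y) (g g' : hom C Y Z) :
  g ≤ g' -> f ⨾ g ≤ f ⨾ g'.
Proof. by move=> le_g; apply: cmp_mono (le_refl _) le_g. Qed.

Lemma tns_monor {X Y Z W} (f : hom C X Y) (g g' : hom C Z W) :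
  g ≤ g' -> f ⊗ g ≤ f ⊗ g'.
Proof. by move=> le_g; apply: tns_mono (le_refl _) le_g. Qed.

Lemma cmp2_eq {X Y Z W} (f : hom C X Y) (g : hom C Y Z) (k : hom C X Z)
  (h : hom C Z W) : f ⨾ g = k -> f ⨾ g ⨾ h = k ⨾ h.
Proof. by move=> <-; rewrite cmp_assoc. Qed.

Lemma cmp3_eq {X Y Z W V} (f : hom C X Y) (g : hom C Y Z) (h : hom C Z W)
  (k : hom C X W) (r : hom C W V) : f ⨾ g ⨾ h = k -> f ⨾ g ⨾ h ⨾ r = k ⨾ r.
Proof. by move=> <-; rewrite !cmp_assoc. Qed.

Lemma tns_factor_lr {X Y Z W} (f : hom C X Y) (g : hom C Z W) :
  f ⊗ g = (f ⊗ idn) ⨾ (idn ⊗ g).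
Proof. by rewrite -tns_cmp cmp_idn idn_cmp. Qed.

Lemma tns_factor_rl {X Y Z W} (f : hom C X Y) (g : hom C Z W) :
  f ⊗ g = (idn ⊗ g) ⨾ (f ⊗ idn).
Proof. by rewrite -tns_cmp cmp_idn idn_cmp. Qed.

Lemma tns_cmpl {X Y Z W} (f : hom C X Y) (g : hom C Y Z) :
  (f ⨾ g) ⊗ @idn C W = (f ⊗ idn) ⨾ (g ⊗ idn).
Proof. by rewrite -tns_cmp idn_cmp. Qed.

Lemma tns_cmpr {X Y Z W} (f : hom C X Y) (g : hom C Y Z) :
  @idn C W ⊗ (f ⨾ g) = (idn ⊗ f) ⨾ (idn ⊗ g).
Proof. by rewrite -tns_cmp idn_cmp. Qed.

Lemma lunit_inv_nat {X Y} (f : hom C X Y) :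
  lunit_inv X ⨾ (@idn C unit ⊗ f) = f ⨾ lunit_inv Y.
Proof.
rewrite -[LHS]cmp_idn -(lunit_iso1 C Y) -cmp_assoc (cmp_assoc _ _ (lunit Y)).
by rewrite lunit_nat -!cmp_assoc lunit_iso2 idn_cmp.
Qed.

Definition is_ladj {X Y} (p : hom C X Y) (q : hom C Y X) : Prop :=
  idn ≤ p ⨾ q /\ q ⨾ p ≤ idn.

Section Boolean.
Variable Bo : BooleanHoms C.
Local Notation "⊥" := (bbot C Bo).
Local Notation "⊤" := (btop C Bo).
Local Notation "a ⊓ b" := (bmeet C Bo a b) (at level 50, left associativity).
Local Notation "¬ a" := (bneg Bo a) (at level 35, right associativity).

Lemma le_meetl {X Y} (a b : hom C X Y) : a ⊓ b ≤ a.
Proof. by case: (proj1 (bmeet_glb C Bo _ _ _ a b) (le_refl _)). Qed.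

Lemma le_meetr {X Y} (a b : hom C X Y) : a ⊓ b ≤ b.
Proof. by case: (proj1 (bmeet_glb C Bo _ _ _ a b) (le_refl _)). Qed.

Lemma le_meet {X Y} (x a b : hom C X Y) : x ≤ a -> x ≤ b -> x ≤ a ⊓ b.
Proof. by move=> le_a le_b; apply/bmeet_glb. Qed.

Lemma bneg_top {X Y} : ¬ (⊤ : hom C X Y) = ⊥.
Proof.
rewrite -(bneg_meet C Bo _ _ ⊤); apply: le_antisym; last exact: le_meetr.
by apply: le_meet; [apply: le_btop | apply: le_refl].
Qed.

Lemma le_bneg {X Y} (a b : hom C X Y) : a ⊓ b ≤ ⊥ -> a ≤ ¬ b.
Proof.
move=> disj; apply: (le_trans_mid (a ⊓ (bjoin C Bo b (¬ b)))).
  by apply: le_meet; [apply: le_refl | rewrite bneg_join; apply: le_btop].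
rewrite bdistr; apply/bjoin_lub; split; last exact: le_meetr.
by apply: le_trans_mid disj _; apply: bbot_le.
Qed.

Lemma ladj_cmp_meet {A X Y} (p : hom C A X) (q : hom C X A) (a b : hom C X Y) :
  is_ladj p q -> (p ⨾ a) ⊓ (p ⨾ b) ≤ p ⨾ (a ⊓ b).
Proof.
case=> unit_pq counit_pq.
apply: (le_trans_mid ((p ⨾ q) ⨾ ((p ⨾ a) ⊓ (p ⨾ b)))).
  by rewrite -{1}(idn_cmp (_ ⊓ _)); apply: cmp_monol.
have retract (e : hom C X Y) : q ⨾ p ⨾ e ≤ e.
  by rewrite -cmp_assoc -[X in _ ≤ X](idn_cmp e); apply: cmp_monol.
rewrite cmp_assoc; apply: cmp_monor; apply: le_meet.
- by apply: le_trans_mid (retract a); apply/cmp_monor/le_meetl.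
- by apply: le_trans_mid (retract b); apply/cmp_monor/le_meetr.
Qed.

End Boolean.

Section Cartesian.
Variable K : Cartesian C.

Definition cap B : hom C (ot B B) unit := cocopy K B ⨾ disc K B.
Definition cup B : hom C unit (ot B B) := codisc K B ⨾ copy K B.

Lemma cup_cap_snake B :
  lunit_inv B ⨾ (cup B ⊗ idn) ⨾ assoc B B B ⨾ (idn ⊗ cap B) ⨾ runit B = idn.
Proof.
rewrite /cup /cap tns_cmpl tns_cmpr !cmp_assoc (cmp3_eq _ _ _ _ _ (frobenius C K B)).
rewrite -!cmp_assoc (cmp_assoc (lunit_inv B)) cocopy_lunit idn_cmp.
by rewrite cmp_assoc copy_runit.
Qed.

(* Compact closure: arrows A → B correspond to effects B ⊗ A → I. *)
Definition bend {A B} (m : hom C A B) : hom C (ot B A) unit := (idn ⊗ m) ⨾ cap B.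

Definition unbend {A B} (h : hom C (ot B A) unit) : hom C A B :=
  lunit_inv A ⨾ (cup B ⊗ idn) ⨾ assoc B B A ⨾ (idn ⊗ h) ⨾ runit B.

Lemma bendK {A B} (m : hom C A B) : unbend (bend m) = m.
Proof.
rewrite /unbend /bend tns_cmpr !cmp_assoc.
rewrite (cmp2_eq _ _ _ _ (eq_sym (assoc_nat idn idn m))) tns_idn !cmp_assoc.
rewrite -(cmp_assoc (cup B ⊗ idn)) -tns_factor_lr tns_factor_rl !cmp_assoc.
by rewrite -(cmp_assoc (lunit_inv A)) lunit_inv_nat !cmp_assoc cup_cap_snake cmp_idn.
Qed.

Lemma unbend_mono {A B} (h h' : hom C (ot B A) unit) : h ≤ h' -> unbend h ≤ unbend h'.
Proof. by move=> le_h; do 3!apply: cmp_monor; apply/cmp_monol/tns_monor. Qed.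

Lemma le_disc_codisc {X Y} (f : hom C X Y) : f ≤ disc K X ⨾ codisc K Y.
Proof.
apply: (le_trans_mid (f ⨾ disc K Y ⨾ codisc K Y)).
  by rewrite -{1}(cmp_idn f); apply/cmp_monor/disc_adj_unit.
by rewrite -cmp_assoc; apply/cmp_monol/lax_disc.
Qed.

Lemma le_disc {E} (y : hom C E unit) : y ≤ disc K E.
Proof. by have := lax_disc C K _ _ y; rewrite disc_unit cmp_idn. Qed.

Lemma disc_is_map A : is_map K (disc K A).
Proof.
split; last by rewrite disc_unit cmp_idn.
rewrite copy_unit tns_factor_lr -[in RHS](cmp_idn (disc K A ⊗ idn)).
rewrite -(lunit_iso1 C A) !cmp_assoc lunit_inv_nat -!cmp_assoc.
by rewrite (cmp_assoc (copy K A)) copy_lunit idn_cmp.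
Qed.

Definition fstp X Z : hom C (ot X Z) X := (idn ⊗ disc K Z) ⨾ runit X.
Definition fstp_radj X Z : hom C X (ot X Z) := runit_inv X ⨾ (idn ⊗ codisc K Z).

Lemma fstp_ladj X Z : is_ladj (fstp X Z) (fstp_radj X Z).
Proof.
rewrite /fstp /fstp_radj; split.
  rewrite cmp_assoc (cmp2_eq _ _ _ _ (runit_iso1 C X)) idn_cmp -tns_cmpr.
  by rewrite -(tns_idn X Z); apply/tns_monor/disc_adj_unit.
rewrite !cmp_assoc (cmp2_eq _ _ _ _ (eq_sym (tns_cmpr _ _))).
apply: (le_trans_mid (runit_inv X ⨾ (idn ⊗ idn) ⨾ runit X)).
  by apply/cmp_monor/cmp_monol/tns_monor/disc_adj_counit.
by rewrite tns_idn idn_cmp runit_iso2; apply: le_refl.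
Qed.

Lemma tns_fstp {X Y Z W} (c : hom C X Y) (d : hom C Z W) :
  (c ⊗ d) ⨾ fstp Y W ≤ fstp X Z ⨾ c.
Proof.
rewrite /fstp -cmp_assoc -tns_cmp cmp_idn.
apply: (le_trans_mid ((c ⊗ disc K Z) ⨾ runit Y)).
  by apply/cmp_monol/tns_monor/lax_disc.
by rewrite tns_factor_rl cmp_assoc runit_nat cmp_assoc; apply: le_refl.
Qed.

Lemma disc_le_fstp Y W : disc K (ot Y W) ≤ fstp Y W ⨾ disc K Y.
Proof.
apply: (le_trans_mid ((fstp Y W ⨾ fstp_radj Y W) ⨾ disc K (ot Y W))).
  by rewrite -{1}(idn_cmp (disc K _)); apply/cmp_monol; case: (fstp_ladj Y W).
by rewrite cmp_assoc; apply/cmp_monor/le_disc.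
Qed.

Variable Bo : BooleanHoms C.

Lemma tns_meet_fstp {X Y Z W} (c c' : hom C X Y) (d d' : hom C Z W) :
  bmeet C Bo (c ⊗ d) (c' ⊗ d') ⨾ fstp Y W ≤ fstp X Z ⨾ bmeet C Bo c c'.
Proof.
apply: le_trans_mid (ladj_cmp_meet Bo _ _ _ _ (fstp_ladj X Z)).
apply: le_meet.
- by apply: le_trans_mid (tns_fstp c d); apply/cmp_monol/le_meetl.
- by apply: le_trans_mid (tns_fstp c' d'); apply/cmp_monol/le_meetr.
Qed.

End Cartesian.
End Monoidal.

Section Peircean.
Variable P : Peircean.
Local Notation C := (pc_cat P).
Local Notation K := (pc_cart P).
Local Notation Bo := (pc_bool P).
Local Notation "⊥" := (bbot C Bo).
Local Notation "a ⊓ b" := (bmeet C Bo a b) (at level 50, left associativity).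

Lemma disc_cmp_bot A B : disc K A ⨾ (⊥ : hom C unit B) = ⊥.
Proof.
rewrite -!bneg_top pc_peirce; first exact: disc_is_map.
congr bneg; apply: le_antisym; first exact: le_btop.
by apply: le_trans_mid (le_disc_codisc K _) _; apply/cmp_monor/le_btop.
Qed.

Lemma cmp_bot_le {A' A B} (x : hom C A' A) : x ⨾ (⊥ : hom C A B) ≤ ⊥.
Proof.
by rewrite -(disc_cmp_bot A) -(disc_cmp_bot A') -cmp_assoc; apply/cmp_monol/le_disc.
Qed.

Lemma bot_cmp_le {A E} (z : hom C E unit) : (⊥ : hom C A E) ⨾ z ≤ ⊥.
Proof.
apply: (le_trans_mid (((⊥ : hom C A unit) ⨾ codisc K E) ⨾ z)).
  exact/cmp_monol/bbot_le.
rewrite cmp_assoc -[X in _ ≤ X](cmp_idn ⊥); apply: cmp_monor.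
by rewrite -(disc_unit _ K); apply: le_disc.
Qed.

Lemma le_bot_from_disc {A B} (m : hom C A B) : m ⨾ disc K B ≤ ⊥ -> m ≤ ⊥.
Proof.
move=> m_disc.
have bend_m : bend K m ≤ ⊥.
  apply: (le_trans_mid ((idn ⊗ m) ⨾ disc K (ot B B))); first exact/cmp_monor/le_disc.
  rewrite disc_ot -cmp_assoc -tns_cmp idn_cmp.
  apply: (le_trans_mid ((disc K B ⊗ ⊥) ⨾ lunit unit)); first exact/cmp_monol/tns_monor.
  by rewrite tns_factor_lr cmp_assoc lunit_nat -cmp_assoc; apply: cmp_bot_le.
rewrite -(bendK K m) -(bendK K ⊥); apply: unbend_mono.
by apply: le_trans_mid bend_m _; apply: bbot_le.
Qed.

Lemma tns_meet_le_bot {X Y Z W} (c c' : hom C X Y) (d d' : hom C Z W) :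
  c ⊓ c' ≤ ⊥ -> (c ⊗ d) ⊓ (c' ⊗ d') ≤ ⊥.
Proof.
move=> disj; apply: le_bot_from_disc.
apply: (le_trans_mid (((c ⊗ d) ⊓ (c' ⊗ d')) ⨾ fstp K Y W ⨾ disc K Y)).
  exact/cmp_monor/disc_le_fstp.
rewrite -cmp_assoc; apply: le_trans_mid (bot_cmp_le (disc K Y)); apply: cmp_monol.
apply: le_trans_mid (tns_meet_fstp K Bo c c' d d') _.
by apply: le_trans_mid (cmp_bot_le (fstp K X Z)); apply: cmp_monor.
Qed.

End Peircean.

Theorem lemma70 (P : Peircean) (X Y Z W : ob (pc_cat P))
  (c : hom (pc_cat P) X Y) (d : hom (pc_cat P) Z W) :
  le (tns c d) (tns_bullet P c d).
Proof.
apply: le_bneg; apply: tns_meet_le_bot.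
by rewrite bneg_meet; apply: le_refl.
Qed.
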